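(* Assume the setting below, but suppose only that $Y_i(0)\le 0$ for all $i=1,\dots,N$ (rather than $Y_i(0)=0$). Then the following conclusions remain true. (i) For every $1\le k\le N$ and $c\in\mathbb{R}$, $p^{\mathrm H}_{k,c}=G_{\mathrm H}(n(c);N,N-k,N_1)$ satisfies $\Pr(p^{\mathrm H}_{k,c}\le\alpha)\le\alpha$ for all $\alpha\in(0,1)$ whenever $\tau_{(k)}\le c$. (ii) $p^{\mathrm H}_{k,c}$ is non-decreasing in $c$ and non-increasing in $k$. The set $\{c: p^{\mathrm H}_{k,c}>\alpha\}$ equals $[y_{(k(\alpha))},\infty)$, where $k(\alpha)=N_1-Q_{\mathrm H}(1-\alpha;N,N-k,N_1)$, and $\Pr(\tau_{(k)}\ge y_{(k(\alpha))})\ge1-\alpha$. The set $\{N-k:p^{\mathrm H}_{k,c}>\alpha,\ 0\le k\le N\}=\{n_{c,\alpha},\dots,N\}$, where $n_{c,\alpha}=N-\max\{k:G_{\mathrm H}(n(c);N,N-k,N_1)>\alpha,\ 0\le k\le N\}$, and this set contains $N(c)$ with probability at least $1-\alpha$. (iii) For $1\le k_1\le\dots\le k_J\le N$ and $k_j(\alpha)=N_1-Q_{\mathrm H}(1-\alpha;N,N-k_j,N_1)$, $$\Pr\Big(\bigcap_{j=1}^J\{\tau_{(k_j)}\ge y_{(k_j(\alpha))}\}\Big)\ge 1-\Pr\Big(\bigcup_{j=1}^J\Big\{\sum_{i=1}^N Z_i\mathbb{1}(i>k_j)>Q_{\mathrm H}(1-\alpha;N,N-k_j,N_1)\Big\}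\Big).$$
   Context: Setting: - There are $N$ units with fixed potential outcomes $Y_i(1),Y_i(0)$ and ITE $\tau_i=Y_i(1)-Y_i(0)$. - The sorted ITEs are $\tau_{(1)}\le\dots\le\tau_{(N)}$. - CRE: the assignment vector $Z\in\{0,1\}^N$ is uniformly distributed over vectors with exactly $N_1$ ones, where $1\le N_1<N$. - The observed outcome is $Y_i=Z_iY_i(1)+(1-Z_i)Y_i(0)$. - $N(c)=\sum_i\mathbb{1}(\tau_i>c)$ and $n(c)=\sum_iZ_i\mathbb{1}(Y_i>c)$. - $G_{\mathrm H}(x;N,n,N_1)=\Pr(X\ge x)$ and $Q_{\mathrm H}(\theta;N,n,N_1)=\inf\{x:\Pr(X\le x)\ge\theta\}$, for $X$ Hypergeometric with parameters $(N,n,N_1)$ (population size $N$, $n$ marked items, sample size $N_1$). - $y_{(1)}\le\dots\le y_{(N_1)}$ are the sorted observed outcomes of the treated units, with $y_{(0)}=-\infty$. *)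

From HB Require Import structures.
From mathcomp Require Import all_boot all_order all_algebra.
From mathcomp Require Import reals constructive_ereal.
Set Implicit Arguments. Unset Strict Implicit. Unset Printing Implicit Defensive.
Import Order.TTheory GRing.Theory Num.Theory.
Local Open Scope ring_scope.

Section Defs.
Variable R : realType.

(* ---------- Hypergeometric(N, n, N1): population N, n marked, sample N1 ---------- *)
Definition hpmf (N n N1 x : nat) : R :=
  if (x <= N1)%N then ('C(n, x) * 'C(N - n, N1 - x))%:R / 'C(N, N1)%:R else 0.

Definition GH (x N n N1 : nat) : R := \sum_(x <= j < N1.+1) hpmf N n N1 j.

Definition Hcdf (x N n N1 : nat) : R := \sum_(0 <= j < x.+1) hpmf N n N1 j.

(* Q_H(theta; N, n, N1) = inf {x : Pr(X <= x) >= theta}; for 0 < theta <= 1 this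
   infimum is the least natural number x (necessarily <= N1) with cdf >= theta. *)
Definition QH (theta : R) (N n N1 : nat) : nat :=
  find (fun x => theta <= Hcdf x N n N1) (iota 0 N1.+1).

(* An assignment Z is identified with the set of treated units; Z is uniform on
   the sets of size N1.  Probability of an event E : *)
Definition Pr (N N1 : nat) (E : pred {set 'I_N}) : R :=
  #|[set Z : {set 'I_N} | (#|Z| == N1) && E Z]|%:R / 'C(N, N1)%:R.

Definition ite (N : nat) (Y1 Y0 : 'I_N -> R) (i : 'I_N) : R := Y1 i - Y0 i.

(* k-th smallest ITE tau_(k), 1 <= k <= N *)
Definition tau_ord (N : nat) (Y1 Y0 : 'I_N -> R) (k : nat) : R :=
  nth 0 (sort <=%R [seq ite Y1 Y0 i | i <- enum 'I_N]) k.-1.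

Definition Yobs (N : nat) (Y1 Y0 : 'I_N -> R) (Z : {set 'I_N}) (i : 'I_N) : R :=
  if i \in Z then Y1 i else Y0 i.

Definition Ncount (N : nat) (Y1 Y0 : 'I_N -> R) (c : R) : nat :=
  #|[set i | c < ite Y1 Y0 i]|.

Definition ncount (N : nat) (Y1 Y0 : 'I_N -> R) (Z : {set 'I_N}) (c : R) : nat :=
  #|[set i | (i \in Z) && (c < Yobs Y1 Y0 Z i)]|.

Definition y_ord (N : nat) (Y1 Y0 : 'I_N -> R) (Z : {set 'I_N}) (j : nat) : \bar R :=
  if j == 0%N then -oo%E
  else (nth 0 (sort <=%R [seq Yobs Y1 Y0 Z i | i in Z]) j.-1)%:E.

Definition pH (N N1 : nat) (Y1 Y0 : 'I_N -> R) (Z : {set 'I_N}) (k : nat) (c : R) : R :=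
  GH (ncount Y1 Y0 Z c) N (N - k) N1.

Definition kalpha (N N1 k : nat) (alpha : R) : nat :=
  (N1 - QH (1 - alpha) N (N - k) N1)%N.

Definition pset (N N1 : nat) (Y1 Y0 : 'I_N -> R) (Z : {set 'I_N}) (c alpha : R) : pred nat :=
  fun m => [exists k : 'I_N.+1, (m == N - k)%N && (alpha < pH N1 Y1 Y0 Z k c)%R].

(* n_{c,alpha} = N - max{k : G_H(n(c); N, N-k, N1) > alpha, 0 <= k <= N}
   (k = 0 always belongs to this set, so the max over nat with default 0 is exact) *)
Definition n_ca (N N1 : nat) (Y1 Y0 : 'I_N -> R) (Z : {set 'I_N}) (c alpha : R) : nat :=
  (N - \max_(k < N.+1 | (alpha < GH (ncount Y1 Y0 Z c) N (N - k) N1)%R) k)%N.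

End Defs.

From HB Require Import structures.
From mathcomp Require Import all_boot all_order all_algebra.
From mathcomp Require Import reals constructive_ereal.
From mathcomp Require Import zify lra.
Set Implicit Arguments. Unset Strict Implicit. Unset Printing Implicit Defensive.
Import Order.TTheory GRing.Theory Num.Theory.
Local Open Scope ring_scope.

(* Under complete randomization the number of treated units in a fixed set S
   of m units is Hypergeometric(N, m, N1), so G_H(|Z ∩ S|; N, m, N1) is a valid
   p-value.  Take S = {i : tau_i > c}.  Since Y_i(0) <= 0, a treated unit has
   Y_i = Y_i(1) <= tau_i, hence n(c) <= |Z ∩ S|; and tau_(k) <= c forces
   |S| <= N - k.  As G_H decreases in its first argument and increases in the
   number of marked items, p^H_{k,c} dominates that valid p-value.  The other
   claims follow from two dualities: alpha < G_H(n) iff n <= Q_H(1 - alpha),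
   and n(c) <= Q iff y_(N1 - Q) <= c. *)

Lemma ltn_find_iota (p : pred nat) (n x : nat) :
  (forall y z, (y <= z)%N -> p y -> p z) -> has p (iota 0 n) ->
  (x < find p (iota 0 n))%N = ~~ p x.
Proof.
move=> p_mono has_p; set q := find p _.
have lt_qn : (q < n)%N by rewrite -[X in (_ < X)%N](size_iota 0) -has_find.
have p_q : p q by move: (nth_find 0 has_p); rewrite nth_iota.
apply/idP/idP => [lt_xq | npx].
  by move: (before_find 0 lt_xq); rewrite nth_iota ?(ltn_trans lt_xq lt_qn) // => ->.
by rewrite ltnNge; apply: contraNN npx => le_qx; apply: p_mono p_q.
Qed.

Lemma count_enum_card (T : finType) (A : {pred T}) (p : pred T) :
  count p (enum A) = #|[pred x in A | p x]|.
Proof.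
rewrite cardE -size_filter; apply/perm_size/uniq_perm.
- by rewrite filter_uniq // enum_uniq.
- exact: enum_uniq.
- by move=> x; rewrite mem_filter !mem_enum !inE andbC.
Qed.

Lemma sorted_nth_le (d : Order.disp_t) (T : orderType d) (x0 : T) (s : seq T)
    (i : nat) (c : T) :
  sorted <=%O s -> (i < size s)%N ->
  (nth x0 s i <= c)%O = (count (fun y => c < y)%O s < size s - i)%N.
Proof.
elim: s i => [|x s IH] i //= sorted_xs lt_is.
have above_x : all (fun y => x <= y)%O s := order_path_min le_trans sorted_xs.
have [lt_cx | le_xc] := ltP c x.
  have count_s : count (fun y => c < y)%O s = size s.
    apply/eqP; rewrite -all_count; apply/allP => y /(allP above_x).
    exact: lt_le_trans.
  have nth_ge_x : (x <= nth x0 (x :: s) i)%O.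
    by case: i lt_is => [|i] lt_is //=; apply/(allP above_x)/mem_nth.
  rewrite leNgt (lt_le_trans lt_cx nth_ge_x) count_s /=; apply/esym/negbTE; lia.
rewrite add0n; case: i lt_is => [|i] lt_is /=; first by rewrite le_xc ltnS count_size.
by rewrite subSS -IH // (path_sorted sorted_xs).
Qed.

Lemma downclosed_ord_bigmax (n : nat) (P : pred 'I_n.+1) :
  P ord0 -> (forall i j : 'I_n.+1, (j <= i)%N -> P i -> P j) ->
  exists2 K : 'I_n.+1, \max_(j | P j) (j : nat) = K & forall i, P i = (i <= K)%N.
Proof.
move=> P0 P_down; have P_gt0 : (0 < #|P|)%N by apply/card_gt0P; exists ord0.
have [K PK max_K] := @eq_bigmax_cond _ P val P_gt0.
exists K => // i; apply/idP/idP => [Pi | le_iK]; last exact: P_down le_iK PK.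
by rewrite -max_K; apply: leq_bigmax_cond.
Qed.

Section CompletelyRandomizedExperiment.
Variables (R : realType) (N N1 : nat).
Hypothesis N1_le_N : (N1 <= N)%N.

Local Notation Pr := (Pr R N1).

Lemma binN1_gt0 : 0 < 'C(N, N1)%:R :> R.
Proof. by rewrite ltr0n bin_gt0. Qed.

Lemma card_draws_pred (E : pred {set 'I_N}) :
  (#|[set Z : {set 'I_N} | (#|Z| == N1) && E Z]|
   + #|[set Z : {set 'I_N} | (#|Z| == N1) && ~~ E Z]|)%N = 'C(N, N1).
Proof.
rewrite -[N in 'C(N, _)]card_ord -card_draws.
rewrite -(cardsID [set Z | E Z] [set Z : {set 'I_N} | #|Z| == N1]).
by congr (_ + _)%N; apply: eq_card => Z; rewrite !inE // andbC.
Qed.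

Lemma Pr_predC (E : pred {set 'I_N}) : Pr (predC E) = 1 - Pr E.
Proof.
have := congr1 (fun n => n%:R / 'C(N, N1)%:R : R) (card_draws_pred E).
rewrite /= natrD mulrDl divff ?lt0r_neq0 ?binN1_gt0 // => <-.
by rewrite /Pr addrC addKr.
Qed.

Lemma le_Pr (E F : pred {set 'I_N}) :
  (forall Z : {set 'I_N}, #|Z| = N1 -> E Z -> F Z) -> Pr E <= Pr F.
Proof.
move=> EF; rewrite ler_wpM2r ?invr_ge0 ?ler0n // ler_nat.
apply/subset_leq_card/subsetP => Z; rewrite !inE => /andP[/eqP cZ EZ].
by rewrite cZ eqxx EF.
Qed.

Lemma eq_Pr (E F : pred {set 'I_N}) :
  (forall Z : {set 'I_N}, #|Z| = N1 -> E Z = F Z) -> Pr E = Pr F.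
Proof.
by move=> EF; apply/le_anti/andP; split; apply: le_Pr => Z cZ; rewrite EF.
Qed.

Lemma Pr_eq1 (E : pred {set 'I_N}) :
  (forall Z : {set 'I_N}, #|Z| = N1 -> E Z) -> Pr E = 1.
Proof.
move=> EZ; have : Pr (predC E) = 0.
  rewrite /Pr (eq_card0 (A := [set Z | _])) ?mul0r // => Z.
  by rewrite !inE /=; case: eqP => // /EZ ->.
by rewrite Pr_predC => /eqP; rewrite subr_eq0 => /eqP <-.
Qed.

Lemma complement_le_Pr (E F : pred {set 'I_N}) :
  (forall Z : {set 'I_N}, #|Z| = N1 -> ~~ E Z -> F Z) -> 1 - Pr E <= Pr F.
Proof. by move=> EF; rewrite -Pr_predC; apply: le_Pr. Qed.

Lemma sum_Pr_level (f : {set 'I_N} -> nat) (a b : nat) :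
  \sum_(a <= j < b) Pr (fun Z => f Z == j) = Pr (fun Z => (a <= f Z < b)%N).
Proof.
rewrite /Pr -mulr_suml -natr_sum; congr (_%:R / _).
elim: b => [|b IH].
  by rewrite big_geq // (eq_card0 (A := [set Z | _])) // => Z; rewrite !inE ltn0 !andbF.
have [ltba | leab] := ltnP b a.
  rewrite big_geq // (eq_card0 (A := [set Z | _])) // => Z; rewrite !inE.
  by apply/negbTE; apply/negP => /and3P[_ h1 h2]; lia.
rewrite big_nat_recr //= IH.
rewrite -(cardsID [set Z | (f Z < b)%N]
                  [set Z : {set 'I_N} | (#|Z| == N1) && (a <= f Z < b.+1)%N]).
congr (_ + _)%N; apply: eq_card => Z; rewrite !inE;
  by case: (_ == N1) => //=; apply/idP/idP; lia.
Qed.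

(* Z |-> (Z :&: S, Z :\: S) pairs the draws meeting S in j units with the
   j-subsets of S and the (N1 - j)-subsets of its complement. *)
Lemma card_draws_cardI (S : {set 'I_N}) (j : nat) :
  #|[set Z : {set 'I_N} | (#|Z| == N1) && (#|Z :&: S| == j)]| =
  if (j <= N1)%N then ('C(#|S|, j) * 'C(N - #|S|, N1 - j))%N else 0%N.
Proof.
have [le_jN1 | lt_N1j] := leqP j N1; last first.
  apply: eq_card0 => Z; rewrite !inE; apply/negP => /andP[/eqP cZ /eqP cZS].
  by move: (subset_leq_card (subsetIl Z S)); rewrite cZ cZS leqNgt lt_N1j.
have -> : (N - #|S|)%N = #|~: S| by rewrite [RHS]cardsCs setCK card_ord.
rewrite -!cards_draws -cardsX.
have split_inj : injective (fun Z : {set 'I_N} => (Z :&: S, Z :\: S)).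
  by move=> Z1 Z2 [eI eD]; rewrite -(setID Z1 S) eI eD setID.
rewrite -(card_imset _ split_inj); apply: eq_card => -[A B].
rewrite inE; apply/imsetP/idP => [[Z] | /andP[]].
  rewrite inE => /andP[/eqP cZ /eqP cZS] [-> ->].
  by rewrite !inE subsetIr subsetDr cZS /= cardsD cZ cZS !eqxx.
rewrite !inE /= => /andP[sAS /eqP cA] /andP[sBS /eqP cB].
have dBS : [disjoint B & S] by rewrite -[S]setCK -subsets_disjoint.
have eI : (A :|: B) :&: S = A.
  by rewrite setIUl (setIidPl sAS) (disjoint_setI0 dBS) setU0.
have eD : (A :|: B) :\: S = B.
  have A0 : A :\: S = set0 by apply/eqP; rewrite setD_eq0.
  by rewrite setDUl A0 set0U (setDidPl dBS).
exists (A :|: B); last by rewrite eI eD.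
by rewrite inE -(cardsID S) eI eD cA cB subnKC // !eqxx.
Qed.

Lemma hpmf_Pr (S : {set 'I_N}) (j : nat) :
  hpmf R N #|S| N1 j = Pr (fun Z => #|Z :&: S| == j).
Proof. by rewrite /Pr card_draws_cardI /hpmf; case: ifP; rewrite ?mul0r. Qed.

Lemma GH_Pr (S : {set 'I_N}) (x : nat) :
  GH R x N #|S| N1 = Pr (fun Z => (x <= #|Z :&: S|)%N).
Proof.
rewrite /GH (eq_bigr _ (fun j _ => hpmf_Pr S j)) sum_Pr_level.
apply: eq_Pr => Z cZ; rewrite ltnS -cZ.
by rewrite (subset_leq_card (subsetIl Z S)) andbT.
Qed.

Lemma Hcdf_Pr (S : {set 'I_N}) (x : nat) :
  Hcdf R x N #|S| N1 = Pr (fun Z => (#|Z :&: S| <= x)%N).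
Proof.
rewrite /Hcdf (eq_bigr _ (fun j _ => hpmf_Pr S j)) sum_Pr_level.
by apply: eq_Pr => Z _; rewrite ltnS.
Qed.

Definition first_units (m : nat) : {set 'I_N} := [set i : 'I_N | (i < m)%N].

Lemma card_first_units (m : nat) : (m <= N)%N -> #|first_units m| = m.
Proof.
move=> le_mN; have widen_inj : injective (widen_ord le_mN).
  by move=> i j /(congr1 val) /= /val_inj.
rewrite -[RHS]card_ord -(card_imset _ widen_inj); apply: eq_card => i.
rewrite inE; apply/idP/imsetP => [lt_im | [k _ ->]]; last exact: (ltn_ord k).
by exists (Ordinal lt_im); last exact: val_inj.
Qed.

Lemma GH_antitone (x y m : nat) : (x <= y)%N -> (m <= N)%N ->
  GH R y N m N1 <= GH R x N m N1.
Proof.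
move=> le_xy le_mN; rewrite -(card_first_units le_mN) !GH_Pr.
by apply: le_Pr => Z _; apply: leq_trans.
Qed.

Lemma GH_monotone (x m m' : nat) : (m <= m' <= N)%N ->
  GH R x N m N1 <= GH R x N m' N1.
Proof.
move=> /andP[le_mm' le_m'N]; have le_mN := leq_trans le_mm' le_m'N.
rewrite -(card_first_units le_mN) -(card_first_units le_m'N) !GH_Pr.
apply: le_Pr => Z _ /leq_trans; apply; apply/subset_leq_card/setIS.
by apply/subsetP => i; rewrite !inE => /leq_trans; apply.
Qed.

Lemma Hcdf_monotone (x y m : nat) : (x <= y)%N -> (m <= N)%N ->
  Hcdf R x N m N1 <= Hcdf R y N m N1.
Proof.
move=> le_xy le_mN; rewrite -(card_first_units le_mN) !Hcdf_Pr.
by apply: le_Pr => Z _ /leq_trans; apply.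
Qed.

Lemma GH0 (m : nat) : (m <= N)%N -> GH R 0 N m N1 = 1.
Proof. by move=> le_mN; rewrite -(card_first_units le_mN) GH_Pr Pr_eq1. Qed.

Lemma GH_all_marked (x : nat) : (x <= N1)%N -> GH R x N N N1 = 1.
Proof.
move=> le_xN1; have := GH_Pr [set: 'I_N] x; rewrite cardsT card_ord => ->.
by apply: Pr_eq1 => Z cZ; rewrite setIT cZ.
Qed.

Lemma Hcdf_N1 (x m : nat) : (m <= N)%N -> (N1 <= x)%N -> Hcdf R x N m N1 = 1.
Proof.
move=> le_mN le_N1x; rewrite -(card_first_units le_mN) Hcdf_Pr.
apply: Pr_eq1 => Z cZ; rewrite (leq_trans _ le_N1x) // -cZ.
exact/subset_leq_card/subsetIl.
Qed.

Lemma GH_succ (n m : nat) : (m <= N)%N -> GH R n.+1 N m N1 = 1 - Hcdf R n N m N1.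
Proof.
move=> le_mN; rewrite -(card_first_units le_mN) GH_Pr Hcdf_Pr -Pr_predC.
by apply: eq_Pr => Z _; rewrite /= ltnNge.
Qed.

(* With x the least threshold such that G_H(x) <= alpha, the event is
   contained in {x <= |Z :&: S|}, whose probability is G_H(x). *)
Lemma GH_pvalue_valid (S : {set 'I_N}) (alpha : R) : 0 < alpha ->
  Pr (fun Z => GH R #|Z :&: S| N #|S| N1 <= alpha) <= alpha.
Proof.
move=> alpha_gt0; have ex_x : exists x, GH R x N #|S| N1 <= alpha.
  by exists N1.+1; rewrite /GH big_geq // ltW.
case: (ex_minnP ex_x) => x GHx_le x_min.
by apply: le_trans GHx_le; rewrite GH_Pr; apply: le_Pr => Z _; apply: x_min.
Qed.

Lemma has_QH (m : nat) (alpha : R) : (m <= N)%N -> 0 <= alpha ->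
  has (fun x => 1 - alpha <= Hcdf R x N m N1) (iota 0 N1.+1).
Proof.
move=> le_mN alpha_ge0; apply/hasP; exists N1; first by rewrite mem_iota; lia.
by rewrite Hcdf_N1 // lerBlDr lerDl.
Qed.

Lemma QH_le_N1 (m : nat) (alpha : R) : (m <= N)%N -> 0 <= alpha ->
  (QH (1 - alpha) N m N1 <= N1)%N.
Proof.
move=> le_mN alpha_ge0; rewrite -ltnS /QH -[X in (_ < X)%N](size_iota 0).
by rewrite -has_find has_QH.
Qed.

Lemma lt_GH_QH (n m : nat) (alpha : R) : (m <= N)%N -> 0 < alpha < 1 ->
  (alpha < GH R n N m N1) = (n <= QH (1 - alpha) N m N1)%N.
Proof.
move=> le_mN /andP[alpha_gt0 alpha_lt1]; case: n => [|n].
  by rewrite GH0.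
have Hcdf_ge_mono : forall y z, (y <= z)%N ->
    1 - alpha <= Hcdf R y N m N1 -> 1 - alpha <= Hcdf R z N m N1.
  by move=> y z le_yz /le_trans; apply; apply: Hcdf_monotone.
rewrite GH_succ // /QH (ltn_find_iota _ Hcdf_ge_mono (has_QH le_mN (ltW alpha_gt0))).
by rewrite -ltNge; apply/idP/idP => ?; lra.
Qed.

End CompletelyRandomizedExperiment.

Section PotentialOutcomes.
Variables (R : realType) (N : nat) (Y1 Y0 : 'I_N -> R).

Lemma ncount_le_card (Z : {set 'I_N}) (c : R) : (ncount Y1 Y0 Z c <= #|Z|)%N.
Proof. by apply/subset_leq_card/subsetP => i; rewrite inE => /andP[]. Qed.

Lemma ncount_antitone (Z : {set 'I_N}) (c1 c2 : R) : c1 <= c2 ->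
  (ncount Y1 Y0 Z c2 <= ncount Y1 Y0 Z c1)%N.
Proof.
move=> le_c12; apply/subset_leq_card/subsetP => i; rewrite !inE => /andP[-> lt_c2]. 
exact: le_lt_trans lt_c2.
Qed.

Lemma y_ord_le (Z : {set 'I_N}) (n Q : nat) (c : R) : #|Z| = n -> (Q <= n)%N ->
  (y_ord Y1 Y0 Z (n - Q) <= c%:E)%E = (ncount Y1 Y0 Z c <= Q)%N.
Proof.
move=> cZ le_Qn; rewrite /y_ord; case: eqP => [n_Q0 | n_Q_neq0].
  by rewrite leNye; apply/esym; apply: leq_trans (ncount_le_card Z c) _; lia.
set s := sort _ _.
have size_s : size s = n by rewrite size_sort size_map -cardE.
have count_s : count (fun y => c < y) s = ncount Y1 Y0 Z c.
  by rewrite count_sort count_map count_enum_card; apply: eq_card => i; rewrite !inE.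
rewrite lee_fin sorted_nth_le ?sort_sorted ?size_s ?count_s //;
  [lia | exact: le_total | lia].
Qed.

Lemma tau_ord_le (k : nat) (c : R) : (1 <= k <= N)%N ->
  (tau_ord Y1 Y0 k <= c) = (Ncount Y1 Y0 c <= N - k)%N.
Proof.
move=> /andP[k_gt0 le_kN]; rewrite /tau_ord; set s := sort _ _.
have size_s : size s = N by rewrite size_sort size_map size_enum_ord.
have count_s : count (fun y => c < y) s = Ncount Y1 Y0 c.
  by rewrite count_sort count_map count_enum_card; apply: eq_card => i; rewrite !inE.
rewrite sorted_nth_le ?sort_sorted ?size_s ?count_s //; [lia | exact: le_total | lia].
Qed.

(* A treated unit observes Y_i = Y_i(1) <= tau_i since Y_i(0) <= 0, so it can
   exceed c only if its effect does. *)
Lemma ncount_le_cardI_ite (Z : {set 'I_N}) (c : R) : (forall i, Y0 i <= 0) ->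
  (ncount Y1 Y0 Z c <= #|Z :&: [set i | (c < ite Y1 Y0 i)%R]|)%N.
Proof.
move=> Y0_le0; apply/subset_leq_card/subsetP => i; rewrite !inE /Yobs.
by case: (i \in Z) => //=; have := Y0_le0 i; rewrite /ite; lra.
Qed.

Lemma tau_ord_sorted : (forall i j : 'I_N, (i <= j)%N -> ite Y1 Y0 i <= ite Y1 Y0 j) ->
  forall (k : nat) (lt_kN : (k.-1 < N)%N), tau_ord Y1 Y0 k = ite Y1 Y0 (Ordinal lt_kN).
Proof.
move=> ite_sorted k lt_kN.
have sorted_ite : sorted <=%R [seq ite Y1 Y0 i | i <- enum 'I_N].
  have sorted_enum : sorted (relpre val leq) (enum 'I_N).
    by rewrite -sorted_map val_enum_ord iota_sorted.
  by rewrite sorted_map; apply: sub_sorted sorted_enum => i j; apply: ite_sorted.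
rewrite /tau_ord (sorted_sort le_trans sorted_ite).
rewrite (nth_map (Ordinal lt_kN)) ?size_enum_ord //.
by rewrite (nth_ord_enum _ (Ordinal lt_kN)).
Qed.

End PotentialOutcomes.

Section HypergeometricPvalue.
Variables (R : realType) (N N1 : nat) (Y1 Y0 : 'I_N -> R).
Hypothesis N1_le_N : (N1 <= N)%N.

Local Notation Pr := (Pr R N1).
Local Notation pH := (pH N1 Y1 Y0).

Lemma pH_valid (k : nat) (c alpha : R) : (forall i, Y0 i <= 0) ->
  (1 <= k <= N)%N -> tau_ord Y1 Y0 k <= c -> 0 < alpha ->
  Pr (fun Z => pH Z k c <= alpha) <= alpha.
Proof.
move=> Y0_le0 k_range tau_le_c alpha_gt0; set S := [set i | c < ite Y1 Y0 i].
have le_S_Nk : (#|S| <= N - k)%N by rewrite -tau_ord_le.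
have le_SN : (#|S| <= N)%N := leq_trans le_S_Nk (leq_subr k N).
apply: le_trans (GH_pvalue_valid N1_le_N S alpha_gt0).
apply: le_Pr => Z _ pH_le_alpha; apply: le_trans pH_le_alpha.
apply: le_trans (GH_antitone R N1_le_N (ncount_le_cardI_ite Y1 Z c Y0_le0) le_SN) _.
by apply: GH_monotone => //; rewrite le_S_Nk leq_subr.
Qed.

Lemma pH_monotone_c (Z : {set 'I_N}) (k : nat) (c1 c2 : R) : c1 <= c2 ->
  pH Z k c1 <= pH Z k c2.
Proof.
move=> le_c12; apply: GH_antitone (ncount_antitone _ _ _ le_c12) _ => //.
exact: leq_subr.
Qed.

Lemma pH_antitone_k (Z : {set 'I_N}) (k1 k2 : nat) (c : R) : (k1 <= k2)%N ->
  pH Z k2 c <= pH Z k1 c.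
Proof. by move=> le_k12; apply: GH_monotone => //; rewrite leq_sub2l ?leq_subr. Qed.

Lemma pH_gt_alpha (Z : {set 'I_N}) (k : nat) (alpha c : R) : #|Z| = N1 ->
  0 < alpha < 1 ->
  (alpha < pH Z k c) = (y_ord Y1 Y0 Z (kalpha N N1 k alpha) <= c%:E)%E.
Proof.
move=> cZ alpha_range; rewrite /pH lt_GH_QH ?leq_subr // y_ord_le //.
by apply: QH_le_N1 (leq_subr _ _) _; case/andP: alpha_range => /ltW.
Qed.

Lemma tau_ord_confidence (k : nat) (alpha : R) : (forall i, Y0 i <= 0) ->
  (1 <= k <= N)%N -> 0 < alpha < 1 ->
  1 - alpha <= Pr (fun Z =>
    (y_ord Y1 Y0 Z (kalpha N N1 k alpha) <= (tau_ord Y1 Y0 k)%:E)%E).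
Proof.
move=> Y0_le0 k_range alpha_range; set c := tau_ord Y1 Y0 k.
have valid := pH_valid Y0_le0 k_range (lexx c) (proj1 (andP alpha_range)).
apply: le_trans (complement_le_Pr R N1_le_N (E := fun Z => pH Z k c <= alpha) _).
  by rewrite lerD2l lerN2.
by move=> Z cZ; rewrite -ltNge pH_gt_alpha.
Qed.

Lemma pset_interval (Z : {set 'I_N}) (c alpha : R) (m : nat) : #|Z| = N1 ->
  0 < alpha < 1 -> pset N1 Y1 Y0 Z c alpha m = (n_ca N1 Y1 Y0 Z c alpha <= m <= N)%N.
Proof.
move=> cZ /andP[alpha_gt0 alpha_lt1]; rewrite /pset /n_ca /pH.
set P := fun k : 'I_N.+1 => alpha < GH R (ncount Y1 Y0 Z c) N (N - k) N1.
have P0 : P ord0.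
  by rewrite /P subn0 GH_all_marked // -cZ ncount_le_card.
have P_down : forall i j : 'I_N.+1, (j <= i)%N -> P i -> P j.
  move=> i j le_ji /lt_le_trans; apply; apply: GH_monotone => //.
  by rewrite leq_sub2l ?leq_subr.
have [K -> P_K] := downclosed_ord_bigmax P0 P_down; have le_KN := ltn_ord K.
apply/existsP/idP => [[k /andP[/eqP -> Pk]] | /andP[le_Km le_mN]].
  by move: Pk; rewrite -/(P k) P_K; lia.
have lt_Nm : (N - m < N.+1)%N by lia.
exists (Ordinal lt_Nm); apply/andP; split; first by rewrite /= subKn.
by rewrite -/(P (Ordinal lt_Nm)) P_K /=; lia.
Qed.

Lemma Ncount_confidence (c alpha : R) : (forall i, Y0 i <= 0) -> 0 < alpha < 1 ->
  1 - alpha <= Pr (fun Z => pset N1 Y1 Y0 Z c alpha (Ncount Y1 Y0 c)).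
Proof.
move=> Y0_le0 /andP[alpha_gt0 _]; set S := [set i | c < ite Y1 Y0 i].
have le_SN : (#|S| <= N)%N by rewrite -[X in (_ <= X)%N]card_ord max_card.
apply: le_trans (complement_le_Pr R N1_le_N
  (E := fun Z => GH R #|Z :&: S| N #|S| N1 <= alpha) _).
  by rewrite lerD2l lerN2; apply: GH_pvalue_valid.
move=> Z _; rewrite -ltNge => lt_alpha_GH.
have lt_k : (N - #|S| < N.+1)%N by rewrite ltnS leq_subr.
apply/existsP; exists (Ordinal lt_k); rewrite /= subKn // eqxx /pH subKn //=.
apply: lt_le_trans lt_alpha_GH _.
by apply: GH_antitone (ncount_le_cardI_ite _ _ _ Y0_le0) _.
Qed.

Lemma simultaneous_confidence (J : nat) (kk : 'I_J -> nat) (alpha : R) :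
  (forall i, Y0 i <= 0) ->
  (forall i j : 'I_N, (i <= j)%N -> ite Y1 Y0 i <= ite Y1 Y0 j) ->
  0 < alpha < 1 -> (forall j, (1 <= kk j <= N)%N) ->
  1 - Pr (fun Z : {set 'I_N} => [exists j,
         (QH (1 - alpha) N (N - kk j) N1 < #|[set i in Z | (kk j <= i)%N]|)%N])
  <= Pr (fun Z : {set 'I_N} => [forall j,
         (y_ord Y1 Y0 Z (kalpha N N1 (kk j) alpha) <= (tau_ord Y1 Y0 (kk j))%:E)%E]).
Proof.
move=> Y0_le0 ite_sorted /andP[alpha_gt0 _] kk_range.
apply: (complement_le_Pr R N1_le_N) => Z cZ; rewrite negb_exists => /forallP le_QH.
apply/forallP => j; move: (le_QH j); rewrite -leqNgt => le_Q.
have lt_kN : ((kk j).-1 < N)%N by have := kk_range j; lia.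
rewrite y_ord_le ?QH_le_N1 ?leq_subr ?ltW //; apply: leq_trans le_Q.
apply: leq_trans (ncount_le_cardI_ite _ _ _ Y0_le0) _.
apply/subset_leq_card/subsetP => i.
rewrite (tau_ord_sorted ite_sorted lt_kN) !inE => /andP[-> lt_ite] /=.
rewrite leqNgt; apply/negP => lt_i_kk.
have : (i <= Ordinal lt_kN)%N by rewrite /=; lia.
by move/ite_sorted; rewrite leNgt lt_ite.
Qed.

End HypergeometricPvalue.

Theorem proposition4 (R : realType) (N N1 : nat) (Y1 Y0 : 'I_N -> R)
  (hN1 : (1 <= N1 < N)%N) (hY0 : forall i, Y0 i <= 0) :
  (* (i) validity of p^H_{k,c} *)
  (forall (k : nat) (c : R), (1 <= k <= N)%N -> tau_ord Y1 Y0 k <= c ->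
     forall alpha : R, 0 < alpha < 1 ->
       Pr R N1 (fun Z : {set 'I_N} => pH N1 Y1 Y0 Z k c <= alpha) <= alpha)
  /\
  (* (ii) monotonicity *)
  (forall (Z : {set 'I_N}), #|Z| = N1 ->
     (forall (k : nat) (c1 c2 : R), (k <= N)%N -> c1 <= c2 ->
        pH N1 Y1 Y0 Z k c1 <= pH N1 Y1 Y0 Z k c2) /\
     (forall (k1 k2 : nat) (c : R), (k1 <= k2 <= N)%N ->
        pH N1 Y1 Y0 Z k2 c <= pH N1 Y1 Y0 Z k1 c))
  /\
  (* (ii) {c : p > alpha} = [y_(k(alpha)), oo) *)
  (forall (Z : {set 'I_N}), #|Z| = N1 ->
     forall (k : nat) (alpha c : R), (1 <= k <= N)%N -> 0 < alpha < 1 ->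
       (alpha < pH N1 Y1 Y0 Z k c) = (y_ord Y1 Y0 Z (kalpha N N1 k alpha) <= c%:E)%E)
  /\
  (* (ii) confidence bound for tau_(k) *)
  (forall (k : nat) (alpha : R), (1 <= k <= N)%N -> 0 < alpha < 1 ->
     1 - alpha <= Pr R N1 (fun Z : {set 'I_N} =>
        (y_ord Y1 Y0 Z (kalpha N N1 k alpha) <= (tau_ord Y1 Y0 k)%:E)%E))
  /\
  (* (ii) {N - k : p_{k,c} > alpha, 0 <= k <= N} = {n_{c,alpha}, ..., N} *)
  (forall (Z : {set 'I_N}), #|Z| = N1 ->
     forall (c alpha : R), 0 < alpha < 1 ->
       forall m : nat, pset N1 Y1 Y0 Z c alpha m = (n_ca N1 Y1 Y0 Z c alpha <= m <= N)%N)
  /\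
  (* (ii) that set contains N(c) with probability >= 1 - alpha *)
  (forall (c alpha : R), 0 < alpha < 1 ->
     1 - alpha <= Pr R N1 (fun Z : {set 'I_N} => pset N1 Y1 Y0 Z c alpha (Ncount Y1 Y0 c)))
  /\
  (* (iii) simultaneous bounds; units labelled so that tau_1 <= ... <= tau_N *)
  ((forall i j : 'I_N, (i <= j)%N -> ite Y1 Y0 i <= ite Y1 Y0 j) ->
   forall (J : nat) (kk : 'I_J -> nat) (alpha : R), 0 < alpha < 1 ->
     (forall j, (1 <= kk j <= N)%N) ->
     (forall j1 j2 : 'I_J, (j1 <= j2)%N -> (kk j1 <= kk j2)%N) ->
     1 - Pr R N1 (fun Z : {set 'I_N} => [exists j : 'I_J,
            (QH (1 - alpha) N (N - kk j) N1 < #|[set i in Z | (kk j <= i)%N]|)%N])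
     <= Pr R N1 (fun Z : {set 'I_N} => [forall j : 'I_J,
            (y_ord Y1 Y0 Z (kalpha N N1 (kk j) alpha) <= (tau_ord Y1 Y0 (kk j))%:E)%E])).
Proof.
have N1_le_N : (N1 <= N)%N by case/andP: hN1 => _ /ltnW.
split.
  by move=> k c k_range tau_le_c alpha /andP[alpha_gt0 _]; apply: pH_valid.
split.
  move=> Z _; split=> [k c1 c2 _ | k1 k2 c /andP[le_k12 _]].
    exact: pH_monotone_c.
  exact: pH_antitone_k.
split; first by move=> Z cZ k alpha c _; apply: pH_gt_alpha.
split; first by move=> k alpha; apply: tau_ord_confidence.
split; first by move=> Z cZ c alpha alpha_range m; apply: pset_interval.
split; first by move=> c alpha; apply: Ncount_confidence.
by move=> ite_sorted J kk alpha alpha_range kk_range _; apply: simultaneous_confidence.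
Qed.
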